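(* Let $X$ be an FK-space containing $\phi$. Then $D_p^qF^+(X)=(X^f)^{d}$.
   Context: An FK-space is a vector subspace of the space $w$ of all complex sequences with a complete metrizable locally convex topology in which coordinate functionals are continuous; $X'$ is its continuous dual. $\delta^j$ has $1$ in position $j$, $0$ elsewhere; $\phi=\operatorname{span}\{\delta^j\}$. $p(n)<q(n)$ are nonnegative integer sequences with $q(n)\to\infty$. $\sigma_p^q[s]=\{x:\lim_n\frac{1}{q(n)-p(n)}\sum_{k=p(n)+1}^{q(n)}\sum_{j=1}^kx_j\text{ exists}\}$. $X^f=\{(f(\delta^k))_k: f\in X'\}$; for $E\subseteq w$, $E^{d}=\{x\in w: (x_ny_n)_n\in\sigma_p^q[s]\ \forall y\in E\}$. $D_p^qF^+(X)=\{x\in w:\lim_n\frac{1}{q(n)-p(n)}\sum_{k=p(n)+1}^{q(n)}\sum_{j=1}^kx_jf(\delta^j)\text{ exists }\forall f\in X'\}$. *)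

(* Complex numbers: R[i] (mathcomp-real-closed
   complex) over an abstract R : realType, viewed through ^o so that it
   carries its (modulus-)norm topology. *)
From HB Require Import structures.
From mathcomp Require Import all_boot all_algebra.
From mathcomp Require Import all_classical all_reals all_analysis.
From mathcomp Require Import complex.
Set Implicit Arguments. Unset Strict Implicit. Unset Printing Implicit Defensive.
Import GRing.Theory Num.Theory.
Local Open Scope classical_set_scope.
Local Open Scope ring_scope.

Definition Cplx (R : realType) : tvsType R[i] := (R[i])^o.

(* Sequences are indexed from 0: the paper's x_j (j >= 1) is [x (j-1)]. *)

Definition delta (R : realType) (j : nat) : nat -> Cplx R :=
  fun n => if n == j then 1 else 0.

(* sigma_p^q[s] : sequences x such that
   (1/(q n - p n)) * sum_{k = p n + 1}^{q n} sum_{j=1}^{k} x_j  converges.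
   (0-based: k' = k-1 ranges over [p n, q n), inner sum over j < k'+1.) *)
Definition sigma_pq (R : realType) (p q : nat -> nat) : set (nat -> Cplx R) :=
  [set x : nat -> Cplx R | exists l : Cplx R,
     (fun n => ((q n - p n)%:R)^-1 *
        \sum_(p n <= k < q n) \sum_(j < k.+1) x j) @ \oo --> l].

Definition complete_metrizable (R : realType) (V : tvsType R[i]) : Prop :=
  exists d : V -> V -> R,
    [/\ ((forall x y, 0 <= d x y) /\
         (forall x y, d x y = 0 <-> x = y)),
        ((forall x y, d x y = d y x) /\
         (forall x y z, d x z <= d x y + d y z)),
        (forall x y z, d (x + z) (y + z) = d x y),
        (forall (x : V) (A : set V),
            nbhs x A <-> (exists2 e : R, 0 < e & [set y | d x y < e] `<=` A)) &
        (forall u : nat -> V,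
            (forall e : R, 0 < e -> exists N : nat, forall m n : nat,
                (N <= m)%N -> (N <= n)%N -> d (u m) (u n) < e) ->
            exists l : V, forall e : R, 0 < e ->
                exists N : nat, forall n : nat, (N <= n)%N -> d (u n) l < e)].

(* An FK-space: a (locally convex, via tvsType) topological vector space V
   over C, complete metrizable, injected linearly into w = (nat -> C) by
   iota (X is the image of iota, with the topology transported from V),
   such that the coordinate functionals are continuous. *)
Definition FK_space (R : realType) (V : tvsType R[i])
    (iota : V -> nat -> Cplx R) : Prop :=
  [/\ complete_metrizable V,
      (forall (a : R[i]) (u v : V) (n : nat),
          iota (a *: u + v) n = a * iota u n + iota v n),
      injective iota &
      (forall n : nat, continuous (fun v : V => iota v n))].

Definition in_dual (R : realType) (V : tvsType R[i]) (f : V -> Cplx R) : Prop :=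
  (forall (a : R[i]) (u v : V), f (a *: u + v) = a * f u + f v) /\ continuous f.

(* X^f = { (f(delta^k))_k : f in X' },  where e k is the element of X
   (i.e. of V) equal to delta^k *)
Definition Xf (R : realType) (V : tvsType R[i]) (e : nat -> V) :
    set (nat -> Cplx R) :=
  [set y : nat -> Cplx R | exists2 f : V -> Cplx R, in_dual f & (y = (fun k => f (e k)))].

Definition dualS (R : realType) (p q : nat -> nat) (E : set (nat -> Cplx R)) :
    set (nat -> Cplx R) :=
  [set x : nat -> Cplx R | forall y, E y -> sigma_pq p q (fun n => x n * y n)].

Definition DF (R : realType) (p q : nat -> nat) (V : tvsType R[i])
    (e : nat -> V) : set (nat -> Cplx R) :=
  [set x : nat -> Cplx R | forall f : V -> Cplx R, in_dual f ->
     sigma_pq p q (fun j => x j * f (e j))].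

From HB Require Import structures.
From mathcomp Require Import all_boot all_algebra.
From mathcomp Require Import all_classical all_reals all_analysis.
From mathcomp Require Import complex.
Import GRing.Theory Num.Theory.
Local Open Scope classical_set_scope.
Local Open Scope ring_scope.

(* The inclusion phi ⊆ X is encoded by [e], with [iota (e j) = delta^j].
   Both sides quantify over the same functionals f in X'. *)
Theorem mainTheorem11 (R : realType) (p q : nat -> nat)
  (hpq : forall n, (p n < q n)%N)
  (hq : forall M : nat, exists N : nat, forall n : nat, (N <= n)%N -> (M <= q n)%N)
  (V : tvsType R[i]) (iota : V -> nat -> Cplx R)
  (hFK : FK_space iota)
  (e : nat -> V) (he : forall j : nat, iota (e j) = delta R j) :
  DF p q e = dualS p q (Xf e).
Proof.
apply/seteqP; split=> x /= x_DF.
- by move=> _ [f f_dual ->]; exact: x_DF.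
- by move=> f f_dual; apply: x_DF; exists f.
Qed.
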